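(* Let $\tau_0,\tau_1,\tau_2>0$, let $0<\alpha\le 1$, and let $a\in\mathcal{B}_\alpha$. Let $A=\mathrm{CC}(a)$ and $B=e_n$. Then $$\sum_{k=0}^{\infty}\|\alpha^{-k}A^kB\|^2\le 2\pi n\,\alpha^{-2n}/\tau_1^2,$$ and for every $k\ge0$, $$\|A^kB\|^2\le\min\left\{2\pi n/\tau_1^2,\ 2\pi n\,\alpha^{2k-2n}/\tau_1^2\right\}.$$
   Context: $\mathcal{C}=\{z\in\mathbb{C}:\Re z\ge(1+\tau_0)|\Im z|\}\cap\{z\in\mathbb{C}:\tau_1<\Re z<\tau_2\}$; for $a=(a_1,\dots,a_n)\in\mathbb{R}^n$, $p_a(z)=z^n+a_1z^{n-1}+\dots+a_n$; $\mathcal{B}_\alpha=\{a\in\mathbb{R}^n:\ p_a(z)/z^n\in\mathcal{C}\text{ for all } |z|=\alpha\}$. $\mathrm{CC}(a)$ is the $n\times n$ companion matrix with ones on the superdiagonal, zeros elsewhere in the first $n-1$ rows, and last row $[-a_n,\dots,-a_1]$; $e_n$ is the $n$-th standard basis vector; $\|\cdot\|$ is the Euclidean norm. *)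

From HB Require Import structures.
From mathcomp Require Import all_boot all_order all_algebra.
From mathcomp Require Import all_classical all_reals all_analysis.
From mathcomp Require Import complex.

Set Implicit Arguments.
Unset Strict Implicit.
Unset Printing Implicit Defensive.

Import Order.TTheory GRing.Theory Num.Theory.
Local Open Scope ring_scope.

Definition setC (R : realType) (tau0 tau1 tau2 : R) (w : R[i]) : Prop :=
  (1 + tau0) * `|complex.Im w| <= complex.Re w /\ tau1 < complex.Re w /\ complex.Re w < tau2.

(* a = (a_1, ..., a_n) is encoded as a : 'rV_n with a 0 i = a_(i+1). *)
Definition p_a (R : realType) (n : nat) (a : 'rV[R]_n) (z : R[i]) : R[i] :=
  z ^+ n + \sum_(i < n) ((a 0 i)%:C)%C * z ^+ (n - i.+1).

Definition B_alpha (R : realType) (tau0 tau1 tau2 alpha : R) (n : nat)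
  (a : 'rV[R]_n) : Prop :=
  forall z : R[i], `|z| = (alpha%:C)%C -> setC tau0 tau1 tau2 (p_a a z / z ^+ n).

Definition CC (R : realType) (n : nat) (a : 'rV[R]_n) : 'M[R]_n :=
  \matrix_(i < n, j < n)
     if i.+1 == n then - a 0 (rev_ord j)
     else (j == i.+1 :> nat)%:R.

(* n-th standard basis (column) vector of R^n (n >= 1, dimension n.+1). *)
Definition e_last (R : realType) (n : nat) : 'cV[R]_n.+1 :=
  delta_mx ord_max 0.

Definition enorm (R : realType) (n : nat) (v : 'cV[R]_n) : R :=
  Num.sqrt (\sum_(i < n) v i 0 ^+ 2).

From HB Require Import structures.
From mathcomp Require Import all_boot all_order all_algebra.
From mathcomp Require Import cyclic separable cyclotomic.
From mathcomp Require Import all_classical all_reals all_analysis.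
From mathcomp Require Import complex ring lra zify.

Set Implicit Arguments.
Unset Strict Implicit.
Unset Printing Implicit Defensive.

Import Order.TTheory GRing.Theory Num.Theory.
Local Open Scope ring_scope.

(* Let q(x) = 1 + a_1 x + ... + a_(n+1) x^(n+1), so that p_a(z)/z^(n+1) = q(1/z),
   and let g be the impulse response of the companion recursion: entry i of
   A^k e_n is g_(k+i), and sum_k g_(n+k) x^k is the power series of 1/q.  For the
   rescaled sequences b_i = q_i alpha^-i and u_k = g_(n+k) alpha^-k the truncated
   product b * u is the unit sequence, so the Toeplitz form
   sum_(i+j=k) b_i u_k u_j equals u_0 = 1 for every truncation length.  Averaging
   over roots of unity of large order, that form is at least
   (min_(|v|=1) Re q(v/alpha)) * sum_k u_k^2, and a in B_alpha says that this
   minimum is at least tau1.  Hence sum_k u_k^2 <= 1/tau1 <= 1/tau1^2, and both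
   estimates follow by summing g_m^2 against the appropriate powers of alpha. *)

Lemma prim_root_exists (C : numClosedFieldType) (M : nat) :
  (0 < M)%N -> {z : C | M.-primitive_root z}.
Proof.
move=> M_gt0; pose p : {poly C} := 'X^M - 1.
have [r Dp] := closed_field_poly_normal p.
rewrite (monicP _) ?monicXnsubC // scale1r in Dp.
have r_unity : all M.-unity_root r.
  by apply/allP => z; rewrite -root_prod_XsubC -Dp.
have size_r : (M < (size r).+1)%N.
  by rewrite -(size_prod_XsubC r id) -Dp size_XnsubC.
apply/sigW; have [|z] := hasP (has_prim_root M_gt0 r_unity _ size_r); last by exists z.
by rewrite -separable_prod_XsubC -Dp separable_Xn_sub_1 // pnatr_eq0 -lt0n.
Qed.

Lemma norm_unity_root (C : numDomainType) (M : nat) (z : C) :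
  (0 < M)%N -> z ^+ M = 1 -> `|z| = 1.
Proof.
move=> M_gt0 zM1; have : `|z| ^+ M = 1 by rewrite -normrX zM1 normr1.
by move/eqP; rewrite pexpr_eq1 // => /eqP.
Qed.

Lemma prim_root_geometric_sum (R : idomainType) (M d : nat) (z : R) :
  M.-primitive_root z ->
  \sum_(l < M) (z ^+ d) ^+ l = if (M %| d)%N then M%:R else 0.
Proof.
move=> zM; case: ifP => [dvd_Md | ndvd_Md].
  have -> : z ^+ d = 1 by apply/eqP; rewrite -(prim_order_dvd zM).
  by rewrite (eq_bigr (fun _ => 1)) ?sumr_const ?card_ord // => l _; rewrite expr1n.
have zd_neq1 : z ^+ d != 1 by rewrite -(prim_order_dvd zM) ndvd_Md.
have : (z ^+ d - 1) * \sum_(l < M) (z ^+ d) ^+ l = 0.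
  by rewrite -subrX1 exprAC (prim_expr_order zM) expr1n subrr.
by move/eqP; rewrite mulf_eq0 subr_eq0 (negPf zd_neq1) => /eqP.
Qed.

Lemma dvdn_add_predM (M k s : nat) :
  (k < M)%N -> (s < M)%N -> (M %| k + M.-1 * s)%N = (k == s).
Proof.
case: M => [//|p] k_lt s_lt.
rewrite /dvdn -(mod0n p.+1) -(eqn_modDr s) add0n -addnA /=.
have -> : (p * s + s = s * p.+1)%N by lia.
by rewrite addnC modnMDl !modn_small.
Qed.

Lemma conjC_unity_root (C : numClosedFieldType) (M : nat) (z : C) :
  (0 < M)%N -> z ^+ M = 1 -> z^* = z ^+ M.-1.
Proof.
move=> M_gt0 zM1; have zJz : z * z^* = 1.
  by rewrite -normCK (norm_unity_root M_gt0 zM1) expr1n.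
case: M M_gt0 zM1 => [//|p] _; rewrite exprS => zzp.
by rewrite -[LHS]mul1r -zzp mulrAC zJz mul1r.
Qed.

Section ToeplitzForm.
Variable R : rcfType.
Local Notation C := R[i].
Local Notation toC := (real_complex R).
Implicit Types (b x : nat -> R) (K L M : nat).

Definition evalC K b (v : C) : C := \sum_(i < K) toC (b i) * v ^+ i.

Definition toeplitz_form K L b x : R :=
  \sum_(i < K) \sum_(k < L) \sum_(j < L)
     (if k == (i + j)%N :> nat then b i * x k * x j else 0).

Lemma conjC_toC r : (toC r)^* = toC r.
Proof. by apply/conj_Creal/complex_realP; exists r. Qed.

Lemma conjC_evalC K b v : (evalC K b v)^* = evalC K b v^*.
Proof.
rewrite /evalC rmorph_sum; apply: eq_bigr => i _.
by rewrite rmorphM rmorphXn /= conjC_toC.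
Qed.

Lemma Re_sum (I : Type) (r : seq I) (P : pred I) (F : I -> C) :
  complex.Re (\sum_(i <- r | P i) F i) = \sum_(i <- r | P i) complex.Re (F i).
Proof. by rewrite (@raddf_sum _ _ (@complex.Re R : Rcomplex R -> R)). Qed.

Lemma dft_toeplitz_form M K L (z : C) b x :
  M.-primitive_root z -> (K + L <= M)%N ->
  \sum_(l < M) evalC K b (z ^+ l)^* * `|evalC L x (z ^+ l)| ^+ 2
  = M%:R * toC (toeplitz_form K L b x).
Proof.
move=> zM KL_le; have M_gt0 := prim_order_gt0 zM.
have expand (l : 'I_M) :
  evalC K b (z ^+ l)^* * `|evalC L x (z ^+ l)| ^+ 2 =
  \sum_(i < K) \sum_(k < L) \sum_(j < L)
     toC (b i * x k * x j) * (z ^+ (k + M.-1 * (i + j))) ^+ l.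
  (* On the unit circle w^* = w^(M-1): every coefficient becomes a geometric
     sum over l, which vanishes unless k = i + j. *)
  set w := z ^+ l; have wJ : w^* = w ^+ M.-1.
    by apply: conjC_unity_root; rewrite // exprAC (prim_expr_order zM) expr1n.
  rewrite normCK conjC_evalC wJ /evalC big_distrl /=; apply: eq_bigr => i _.
  rewrite big_distrl big_distrr /=; apply: eq_bigr => k _.
  rewrite big_distrr big_distrr /=; apply: eq_bigr => j _.
  rewrite [in RHS]exprAC -/w exprD exprM exprD !rmorphM /=; ring.
rewrite (eq_bigr _ (fun l _ => expand l)) exchange_big rmorph_sum big_distrr /=.
apply: eq_bigr => i _; rewrite exchange_big rmorph_sum big_distrr.
apply: eq_bigr => k _; rewrite exchange_big rmorph_sum big_distrr.
apply: eq_bigr => j _; rewrite -big_distrr /= (prim_root_geometric_sum _ zM).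
have := ltn_ord i; have := ltn_ord j; have := ltn_ord k => k_lt j_lt i_lt.
rewrite dvdn_add_predM; [|lia|lia].
by case: eqP => _; [rewrite mulrC | rewrite mulr0 rmorph0 mulr0].
Qed.

Lemma toeplitz_form_unit L x :
  toeplitz_form 1 L (fun i => (i == 0)%:R) x = \sum_(k < L) x k ^+ 2.
Proof.
rewrite /toeplitz_form big_ord1; apply: eq_bigr => k _.
rewrite (bigD1 k) //= eqxx mul1r -expr2 big1 ?addr0 // => j /negPf jk.
by rewrite add0n; case: eqP => // /val_inj kj; rewrite kj eqxx in jk.
Qed.

Lemma toeplitz_form_ge K L b x t :
  (forall v : C, `|v| = 1 -> t <= complex.Re (evalC K b v)) ->
  t * \sum_(k < L) x k ^+ 2 <= toeplitz_form K L b x.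
Proof.
move=> Re_b_ge; pose M := (K + L).+1.
have [z zM] := @prim_root_exists C M isT.
have Re_scale (u : C) r : complex.Re (u * toC r) = complex.Re u * r.
  by case: u => ? ? /=; ring.
have ReM r : complex.Re (M%:R * toC r) = M%:R * r.
  by rewrite -(rmorph_nat toC) -rmorphM.
have dft := congr1 (@complex.Re R) (dft_toeplitz_form b x zM (leqnSn _)).
(* Parseval's identity is the case of the unit sequence b = (1, 0, 0, ...). *)
have parseval := congr1 (@complex.Re R)
  (dft_toeplitz_form (K := 1) (fun i => (i == 0)%:R) x zM (leq_addl K L)).
rewrite toeplitz_form_unit in parseval.
rewrite -(ler_pM2l (ltr0Sn R (K + L))) -[X in _ <= X]ReM -dft mulrCA -ReM -parseval.
rewrite !Re_sum mulr_sumr; apply: ler_sum => l _.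
rewrite -add_Re2_Im2 !Re_scale /evalC big_ord1 expr0 mulr1 rmorph1 /= mul1r.
rewrite ler_wpM2r ?addr_ge0 ?sqr_ge0 //; apply: Re_b_ge.
have z_norm1 := norm_unity_root (prim_order_gt0 zM) (prim_expr_order zM).
by rewrite norm_conjC normrX z_norm1 expr1n.
Qed.

Lemma toeplitz_form_conv_unit K L b x : (0 < L)%N ->
  (forall k, (k < L)%N ->
     \sum_(i < K) (if (i <= k)%N then b i * x (k - i)%N else 0) = (k == 0)%:R) ->
  toeplitz_form K L b x = x 0.
Proof.
case: L => [//|L] _ conv_unit.
have inner (k : 'I_L.+1) :
  \sum_(i < K) \sum_(j < L.+1) (if k == (i + j)%N :> nat then b i * x j else 0)
  = (k == 0 :> nat)%:R :> R.
  rewrite -conv_unit //; apply: eq_bigr => i _; case: (leqP i k) => ik.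
    have kBi_lt : (k - i < L.+1)%N by have := ltn_ord k; lia.
    rewrite (bigD1 (Ordinal kBi_lt)) //= subnKC // eqxx big1 ?addr0 // => j.
    rewrite -val_eqE /= => jk; case: eqP => // kij.
    by rewrite kij addKn eqxx in jk.
  by rewrite big1 // => j _; case: eqP => //; lia.
rewrite /toeplitz_form exchange_big /=.
rewrite (eq_bigr (fun k : 'I_L.+1 => x k * (k == 0 :> nat)%:R)); last first.
  move=> k _; rewrite -inner mulr_sumr; apply: eq_bigr => i _.
  rewrite mulr_sumr; apply: eq_bigr => j _.
  by case: ifP => _; [rewrite -mulrA mulrCA | rewrite mulr0].
rewrite big_ord_recl /= mulr1 big1 ?addr0 // => i _; by rewrite mulr0.
Qed.

End ToeplitzForm.

Lemma conv_geometric_scale (R : fieldType) K (b x : nat -> R) (s : R) k :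
  s != 0 ->
  \sum_(i < K) (if (i <= k)%N then (b i * s ^- i) * (x (k - i)%N * s ^- (k - i)) else 0)
  = s ^- k * \sum_(i < K) (if (i <= k)%N then b i * x (k - i)%N else 0).
Proof.
move=> s0; rewrite mulr_sumr; apply: eq_bigr => i _.
case: leqP => ik; last by rewrite mulr0.
by rewrite -{3}(subnKC ik) exprD invfM; field; rewrite !expf_neq0.
Qed.

Lemma evalC_scale (R : rcfType) K (b : nat -> R) (s : R) (v : R[i]) :
  evalC K (fun i => b i * s ^- i) v = evalC K b (v / (real_complex R s)).
Proof.
apply: eq_bigr => i _.
by rewrite rmorphM fmorphV rmorphXn exprMn exprVn mulrAC mulrA.
Qed.

Section CompanionImpulse.
Variables (R : realType) (n : nat) (a : 'rV[R]_n.+1).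

(* For m >= n, g_m is the last entry of A^(m-n) e_n; the values below n are the
   zeros that make entry i of A^k e_n equal to g_(k+i). *)
Definition impulse (m : nat) : R :=
  if (m <= n)%N then (m == n)%:R else (CC a ^+ (m - n) *m e_last R n) ord_max 0.

Lemma impulse_small m : (m < n)%N -> impulse m = 0.
Proof. by move=> m_lt; rewrite /impulse ltnW // ltn_eqF. Qed.

Lemma impulse_n : impulse n = 1.
Proof. by rewrite /impulse leqnn eqxx. Qed.

Lemma CC_pow_e_lastE k (i : 'I_n.+1) : (CC a ^+ k *m e_last R n) i 0 = impulse (k + i).
Proof.
elim: k i => [|k IH] i.
  rewrite expr0 mul1mx /e_last mxE /impulse add0n -ltnS ltn_ord.
  by rewrite andbT.
case: (ltnP i n) => i_lt.
  rewrite exprS -mulmxE -mulmxA mxE (bigD1 (Ordinal (i_lt : (i.+1 < n.+1)%N))) //=.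
  rewrite big1 => [|j ji]; last first.
    rewrite [CC a _ _]mxE eqSS (ltn_eqF i_lt).
    by case: eqP => [ji'|]; [rewrite -val_eqE /= ji' eqxx in ji | rewrite mul0r].
  by rewrite addr0 [CC a _ _]mxE /= eqSS (ltn_eqF i_lt) eqxx mul1r IH addSnnS.
have -> : i = ord_max by apply: val_inj => /=; have := ltn_ord i; lia.
by rewrite /impulse /= ifF ?addnK //; lia.
Qed.

Lemma impulse_rec k : impulse (n + k.+1) = - \sum_(i < n.+1) a 0 i * impulse (n + k - i).
Proof.
have := CC_pow_e_lastE k.+1 ord_max; rewrite /= addnC => <-.
rewrite exprS -mulmxE -mulmxA mxE (reindex_inj rev_ord_inj) /= -sumrN.
apply: eq_bigr => i _; rewrite CC_pow_e_lastE [CC a _ _]mxE /= eqxx rev_ordK /= mulNr.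
by congr (- (_ * impulse _)); have := ltn_ord i; lia.
Qed.

(* The coefficient of z^(n+1-i) in p_a; its values for i > n+1 are junk. *)
Definition coef_pa (i : nat) : R := if i is i'.+1 then a 0 (inord i') else 1.

Lemma conv_coef_pa_impulse k :
  \sum_(i < n.+2) (if (i <= k)%N then coef_pa i * impulse (n + (k - i)) else 0)
  = (k == 0)%:R.
Proof.
rewrite big_ord_recl /= subn0 mul1r; case: k => [|k].
  by rewrite addn0 impulse_n big1 ?addr0.
rewrite impulse_rec; apply/eqP; rewrite addrC subr_eq0; apply/eqP.
apply: eq_bigr => i _; rewrite /= inord_val subSS ltnS.
case: leqP => ik; first by rewrite addnBA.
by rewrite impulse_small ?mulr0 //; have := ltn_ord i; lia.
Qed.

Lemma p_a_div_expr (z : R[i]) :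
  z != 0 -> p_a a z / z ^+ n.+1 = evalC n.+2 coef_pa z^-1.
Proof.
move=> z0; rewrite /p_a /evalC [RHS]big_ord_recl /= expr0 mulr1 rmorph1.
rewrite mulrDl divff ?expf_neq0 //.
congr (1 + _); rewrite mulr_suml; apply: eq_bigr => i _.
rewrite /= inord_val subSS exprVn.
have -> : z ^+ n.+1 = z ^+ (n - i) * z ^+ i.+1 by rewrite -exprD addnS subnK // -ltnS.
by field; rewrite !expf_neq0.
Qed.

End CompanionImpulse.

Lemma enorm_sqr (R : realType) m (v : 'cV[R]_m) : enorm v ^+ 2 = \sum_(i < m) v i 0 ^+ 2.
Proof. by rewrite /enorm sqr_sqrtr // sumr_ge0 // => i _; apply: sqr_ge0. Qed.

Lemma enorm_CC_pow_e_last (R : realType) n (a : 'rV[R]_n.+1) k :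
  enorm (CC a ^+ k *m e_last R n) ^+ 2 = \sum_(i < n.+1) impulse a (k + i) ^+ 2.
Proof. by rewrite enorm_sqr; apply: eq_bigr => i _; rewrite CC_pow_e_lastE. Qed.

Section Estimates.
Variables (R : realType) (n : nat) (a : 'rV[R]_n.+1) (tau0 tau1 tau2 alpha : R).
Hypotheses (tau1_gt0 : 0 < tau1) (alpha_gt0 : 0 < alpha) (alpha_le1 : alpha <= 1).
Hypothesis Ba : B_alpha tau0 tau1 tau2 alpha a.
Local Notation toC := (real_complex R).

Let alpha_neq0 : alpha != 0. Proof. exact: lt0r_neq0. Qed.
Let b i := coef_pa a i * alpha ^- i.
Let u k := impulse a (n + k) * alpha ^- k.

Lemma Re_evalC_scaled_gt v : `|v| = 1 -> tau1 < complex.Re (evalC n.+2 b v).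
Proof.
move=> v1; have v0 : v != 0 by rewrite -normr_eq0 v1 oner_neq0.
pose z := toC alpha / v.
have z0 : z != 0 by rewrite mulf_neq0 ?invr_eq0 ?fmorph_eq0.
have norm_z : `|z| = toC alpha.
  by rewrite normrM normfV v1 invr1 mulr1 ger0_norm // ler0c ltW.
have [_ [Re_gt _]] := Ba norm_z.
have zV : z^-1 = v / toC alpha by rewrite invfM invrK mulrC.
by rewrite /b evalC_scale -zV -p_a_div_expr.
Qed.

Lemma scaled_impulse0 : u 0 = 1.
Proof. by rewrite /u addn0 impulse_n expr0 invr1 mulr1. Qed.

Lemma scaled_conv_unit k :
  \sum_(i < n.+2) (if (i <= k)%N then b i * u (k - i)%N else 0) = (k == 0)%:R.
Proof.
rewrite /b /u (@conv_geometric_scale _ _ (coef_pa a) (fun j => impulse a (n + j))) //.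
by rewrite conv_coef_pa_impulse; case: k => [|k]; rewrite ?expr0 ?invr1 ?mul1r ?mulr0.
Qed.

Lemma scaled_impulse_energy L : tau1 * \sum_(k < L) u k ^+ 2 <= 1.
Proof.
case: L => [|L]; first by rewrite big_ord0 mulr0 ler01.
rewrite -scaled_impulse0 -(@toeplitz_form_conv_unit _ n.+2 L.+1 b u) //.
  by apply: toeplitz_form_ge => v /Re_evalC_scaled_gt/ltW.
by move=> k _; apply: scaled_conv_unit.
Qed.

Lemma tau1_le1 : tau1 <= 1.
Proof.
by have := scaled_impulse_energy 1; rewrite big_ord1 scaled_impulse0 expr1n mulr1.
Qed.

Lemma scaled_impulse_energy_le L : \sum_(k < L) u k ^+ 2 <= tau1 ^- 2.
Proof.
have := scaled_impulse_energy L; move: (\sum_(k < L) _) => S tS_le1.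
rewrite -div1r ler_pdivlMr ?exprn_gt0 // expr2 mulrA [S * _]mulrC.
by rewrite (le_trans (ler_wpM2r (ltW tau1_gt0) tS_le1)) ?mul1r ?tau1_le1.
Qed.

Lemma scaled_impulse_sqr_le k : u k ^+ 2 <= tau1 ^- 2.
Proof.
apply: le_trans (scaled_impulse_energy_le k.+1); rewrite big_ord_recr /= lerDr.
by apply: sumr_ge0 => j _; apply: sqr_ge0.
Qed.

Lemma impulse_shift k : impulse a (n + k) = u k * alpha ^+ k.
Proof. by rewrite /u mulfVK ?expf_neq0. Qed.

Lemma impulse_sqr_le m : impulse a m ^+ 2 <= tau1 ^- 2.
Proof.
case: (ltnP m n) => [m_lt | /subnKC <-].
  by rewrite impulse_small // expr0n invr_ge0 exprn_ge0 // ltW.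
rewrite impulse_shift exprMn; apply: le_trans (scaled_impulse_sqr_le (m - n)).
by rewrite ler_piMr ?sqr_ge0 // -exprM exprn_ile1 // ltW.
Qed.

Lemma impulse_sqr_le_alpha m :
  impulse a m ^+ 2 <= alpha ^+ (2 * m) * alpha ^- (2 * n) / tau1 ^+ 2.
Proof.
case: (ltnP m n) => [m_lt | /subnKC <-].
  by rewrite impulse_small // expr0n !divr_ge0 ?exprn_ge0 // ltW.
rewrite impulse_shift exprMn -exprM (mulnC _ 2%N) mulnDr exprD.
rewrite [alpha ^+ (2 * n) * _]mulrC mulfK ?expf_neq0 //.
by rewrite mulrC; apply: ler_wpM2l; rewrite ?exprn_ge0 ?scaled_impulse_sqr_le // ltW.
Qed.

Let weighted m := impulse a m ^+ 2 * alpha ^- (2 * m).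

Let weighted_ge0 m : 0 <= weighted m.
Proof. by rewrite mulr_ge0 ?sqr_ge0 ?invr_ge0 ?exprn_ge0 ?ltW. Qed.

Lemma weighted_impulse_energy_le P :
  \sum_(m < P) weighted m <= alpha ^- (2 * n) / tau1 ^+ 2.
Proof.
apply: (@le_trans _ _ (\sum_(m < n + P) weighted m)).
  by rewrite addnC big_split_ord lerDl sumr_ge0.
rewrite big_split_ord /= big1 ?add0r => [|m _]; last first.
  by rewrite /weighted impulse_small // expr0n mul0r.
apply: (@le_trans _ _ (alpha ^- (2 * n) * \sum_(k < P) u k ^+ 2)).
  rewrite mulr_sumr le_eqVlt; apply/orP; left; apply/eqP; apply: eq_bigr => k _.
  rewrite /weighted impulse_shift exprMn -exprM (mulnC _ 2%N) mulnDr exprD invfM.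
  by field; rewrite !expf_neq0.
by apply: ler_wpM2l; rewrite ?invr_ge0 ?exprn_ge0 ?scaled_impulse_energy_le // ltW.
Qed.

Lemma CC_pow_e_last_sqr_le k :
  enorm (CC a ^+ k *m e_last R n) ^+ 2 <= n.+1%:R / tau1 ^+ 2.
Proof.
rewrite enorm_CC_pow_e_last; apply: (@le_trans _ _ (\sum_(i < n.+1) tau1 ^- 2)).
  by apply: ler_sum => i _; apply: impulse_sqr_le.
by rewrite sumr_const card_ord mulr_natl.
Qed.

Lemma CC_pow_e_last_sqr_le_alpha k :
  enorm (CC a ^+ k *m e_last R n) ^+ 2
  <= n.+1%:R * alpha ^+ (2 * k) * alpha ^- (2 * n) / tau1 ^+ 2.
Proof.
rewrite enorm_CC_pow_e_last.
apply: (@le_trans _ _ (\sum_(i < n.+1) alpha ^+ (2 * k) * alpha ^- (2 * n) / tau1 ^+ 2)).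
  apply: ler_sum => i _; apply: le_trans (impulse_sqr_le_alpha (k + i)) _.
  rewrite mulnDr exprD -!mulrA; apply: ler_wpM2l; first by rewrite exprn_ge0 // ltW.
  apply: ler_piMl; last by rewrite exprn_ile1 // ltW.
  by rewrite mulr_ge0 ?invr_ge0 ?exprn_ge0 // ltW.
by rewrite sumr_const card_ord -!mulrA mulr_natl.
Qed.

Lemma scaled_CC_pow_partial_sum_le L :
  \sum_(k < L) enorm (alpha ^- k *: (CC a ^+ k *m e_last R n)) ^+ 2
  <= n.+1%:R * alpha ^- (2 * n) / tau1 ^+ 2.
Proof.
under eq_bigr do rewrite enorm_sqr.
rewrite exchange_big /=.
apply: (@le_trans _ _ (\sum_(i < n.+1) alpha ^- (2 * n) / tau1 ^+ 2)).
  apply: ler_sum => i _.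
  apply: (@le_trans _ _ (\sum_(m < i + L) weighted m));
    last exact: weighted_impulse_energy_le.
  rewrite big_split_ord /= -[X in X <= _]add0r lerD ?sumr_ge0 //.
  apply: ler_sum => k _; rewrite mxE CC_pow_e_lastE exprMn /weighted addnC mulrC.
  apply: ler_wpM2l; first exact: sqr_ge0.
  rewrite exprVn -exprM mulnC mulnDr exprD invfM.
  apply: ler_peMl; first by rewrite invr_ge0 exprn_ge0 // ltW.
  by rewrite invf_ge1 ?exprn_gt0 ?exprn_ile1 // ltW.
by rewrite sumr_const card_ord -mulrA mulr_natl.
Qed.

End Estimates.

Theorem lemma4p4 (R : realType) (n : nat) (tau0 tau1 tau2 alpha : R)
  (a : 'rV[R]_n.+1) :
  0 < tau0 -> 0 < tau1 -> 0 < tau2 -> 0 < alpha -> alpha <= 1 ->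
  B_alpha tau0 tau1 tau2 alpha a ->
  ((\sum_(0 <= k <oo)
      ((enorm ((alpha ^- k) *: (CC a ^+ k *m e_last R n))) ^+ 2)%:E
    <= (2 * pi * n.+1%:R * alpha ^- (2 * n.+1) / tau1 ^+ 2)%:E)%E
  /\ forall k : nat,
      enorm (CC a ^+ k *m e_last R n) ^+ 2
      <= Num.min (2 * pi * n.+1%:R / tau1 ^+ 2)
                 (2 * pi * n.+1%:R * alpha ^+ (2 * k) * alpha ^- (2 * n.+1)
                    / tau1 ^+ 2)).
Proof.
move=> _ tau1_gt0 _ alpha_gt0 alpha_le1 Ba.
(* The bounds proved above are sharper: the factor 2 pi and one power of
   alpha^-2 are slack. *)
have two_pi_widen (x : R) : 0 <= x -> x <= 2 * pi * x.
  by move=> x_ge0; apply: ler_peMl => //; have := pi_ge2 R; lra.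
have T_ge0 : 0 <= (tau1 ^+ 2)^-1 by rewrite invr_ge0 exprn_ge0 // ltW.
have alpha_inv_le : alpha ^- (2 * n) <= alpha ^- (2 * n.+1).
  by rewrite lef_pV2 ?posrE ?exprn_gt0 //; apply: ler_wiXn2l; [exact: ltW | | lia].
split.
  apply: lime_le; first by apply: is_cvg_nneseries => k _ _; rewrite lee_fin sqr_ge0.
  apply: nearW => L; rewrite sumEFin lee_fin big_mkord.
  apply: le_trans (scaled_CC_pow_partial_sum_le tau1_gt0 alpha_gt0 alpha_le1 Ba L) _.
  rewrite -!mulrA [X in _ <= X]mulrA; apply: le_trans (two_pi_widen _ _).
    apply: ler_wpM2l; [exact: ler0n | exact: ler_wpM2r].
  by rewrite !mulr_ge0 ?invr_ge0 ?exprn_ge0 // ltW.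
move=> k; rewrite le_min; apply/andP; split.
  apply: le_trans (CC_pow_e_last_sqr_le tau1_gt0 alpha_gt0 alpha_le1 Ba k) _.
  by rewrite -[X in _ <= X]mulrA two_pi_widen // mulr_ge0.
apply: le_trans (CC_pow_e_last_sqr_le_alpha tau1_gt0 alpha_gt0 alpha_le1 Ba k) _.
rewrite -!mulrA [X in _ <= X]mulrA; apply: le_trans (two_pi_widen _ _).
  apply: ler_wpM2l; first exact: ler0n.
  apply: ler_wpM2l; first by rewrite exprn_ge0 // ltW.
  exact: ler_wpM2r.
by rewrite !mulr_ge0 ?invr_ge0 ?exprn_ge0 // ltW.
Qed.
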